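(* Let $(X,T)$ be a minimal system and let $p_1,\ldots,p_d$ be non-constant integer polynomials. The following are equivalent: (1) there is a dense $G_\delta$ subset $\Omega$ of $X$ such that $\{(T^{p_1(n)}x,\ldots,T^{p_d(n)}x):n\in\mathbb{Z}\}$ is dense in $X^d$ for every $x\in\Omega$; (2) there exists $x\in X$ such that $\{(T^{p_1(n)}x,\ldots,T^{p_d(n)}x):n\in\mathbb{Z}\}$ is dense in $X^d$; (3) for any non-empty open subsets $U,V_1,\ldots,V_d$ of $X$ there is $n\in\mathbb{Z}$ with $U\cap T^{-p_1(n)}V_1\cap\cdots\cap T^{-p_d(n)}V_d\neq\emptyset$.
   Context: A system $(X,T)$ is a compact metric space with a homeomorphism $T$; minimal means every orbit is dense. An integer polynomial is a polynomial with rational coefficients taking integer values on the integers. *)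

From HB Require Import structures.
From mathcomp Require Import all_boot all_order all_algebra.
From mathcomp Require Import all_classical all_reals all_analysis.
From mathcomp Require Import borel_hierarchy.
Set Implicit Arguments. Unset Strict Implicit. Unset Printing Implicit Defensive.
Import Order.TTheory GRing.Theory Num.Theory.
Local Open Scope ring_scope.
Local Open Scope classical_set_scope.

Definition homeomorphism (X : topologicalType) (T Tinv : X -> X) : Prop :=
  [/\ continuous T, continuous Tinv, cancel T Tinv & cancel Tinv T].

Definition iterz (X : Type) (T Tinv : X -> X) (n : int) : X -> X :=
  match n with
  | Posz k => iter k T
  | Negz k => iter k.+1 Tinv
  end.

Definition orbitZ (X : Type) (T Tinv : X -> X) (x : X) : set X :=
  [set y | exists n : int, y = iterz T Tinv n x].

Definition minimal_system (X : topologicalType) (T Tinv : X -> X) : Prop :=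
  forall x : X, dense (orbitZ T Tinv x).

Definition integer_poly (p : {poly rat}) : Prop :=
  forall n : int, p.[n%:~R] \is a Num.int.

Definition pevalz (p : {poly rat}) (n : int) : int := numq p.[n%:~R].

From HB Require Import structures.
From mathcomp Require Import all_boot all_order all_algebra.
From mathcomp Require Import all_classical all_reals all_analysis.
From mathcomp Require Import borel_hierarchy finmap.
Set Implicit Arguments.
Unset Strict Implicit.
Unset Printing Implicit Defensive.

Import Order.TTheory GRing.Theory Num.Theory.
Local Open Scope ring_scope.
Local Open Scope classical_set_scope.

(* (1) => (2) because a dense G_delta set is nonempty.  (2) => (3): pick T^m x
   in U; density of the polynomial orbit of x in X^d puts some
   (T^{p_i(n)} x)_i in the open box of the T^{-m} V_i, and T^m commutes with
   the T^{p_i(n)}.  (3) => (1): for every radius 1/(k+1) fix a finite net of X;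
   for each d-tuple g of net points, the set of x whose polynomial orbit meets
   the box of balls around g is open, and dense by (3).  By Baire, the
   intersection Omega of these countably many sets is a dense G_delta, and the
   polynomial orbit of any point of Omega comes within 2/(k+1) of every point
   of X^d. *)

Lemma open_dense_fin_bigcap (T : topologicalType) (I : finType) (A : I -> set T) :
  (forall i, open (A i) /\ dense (A i)) ->
  open (\bigcap_(i in [set: I]) A i) /\ dense (\bigcap_(i in [set: I]) A i).
Proof.
move=> oA; have -> : [set: I] = [set` enum I].
  by apply/seteqP; split=> // i _; rewrite /= mem_enum.
rewrite bigcap_seq; apply: (big_ind (fun S : set T => open S /\ dense S)).
- by split=> [|O [x Ox] _]; [exact: openT | exists x].
- by move=> S1 S2 [oS1 dS1] [oS2 dS2]; split; [exact: openI | exact: denseI].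
- by move=> i _; exact: oA.
Qed.

Lemma open_forall_preimage (X Y : topologicalType) (I : finType)
    (F : I -> X -> Y) (W : I -> set Y) :
  (forall i, continuous (F i)) -> (forall i, open (W i)) ->
  open [set x | forall i, W i (F i x)].
Proof.
move=> cF oW; rewrite openE => x Wx; apply: filter_forall => i.
by apply: cF; apply: open_nbhs_nbhs; split; [exact: oW | exact: Wx].
Qed.

(* [compact_cover] is stated for pointed spaces; a point of [A] provides one. *)
Definition pointed_at {T : Type} (x : T) : Type := T.
HB.instance Definition _ (T : topologicalType) (x : T) :=
  Topological.copy (pointed_at x) T.
HB.instance Definition _ (T : topologicalType) (x : T) :=
  isPointed.Build (pointed_at x) x.

Lemma compact_cover_compact (T : topologicalType) (A : set T) :
  compact A -> cover_compact A.
Proof.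
have [[x _]|/set0P/negP/negbNE/eqP->] := pselect (A !=set0); last first.
  by move=> _ I D f _ _; exists fset0.
move=> cA; have : @cover_compact (pointed_at x) A by rewrite -compact_cover.
exact.
Qed.

Section PseudoMetric.
Variables (R : realType) (X : pseudoMetricType R).

Lemma compact_finite_ball_cover (e : R) : compact [set: X] -> 0 < e ->
  exists D : {fset X}, [set: X] `<=` \bigcup_(z in [set` D]) (ball z e)°.
Proof.
move=> cX e0.
have [D _ coverD] : finite_subset_cover [set: X] (fun z => (ball z e)°) [set: X].
  apply: (compact_cover_compact cX) => [z _|z _]; first exact: open_interior.
  by exists z => //; exact: nbhsx_ballx.
by exists D.
Qed.

Lemma open_closure_subset_open_dense (W G : set X) :
  open W -> W !=set0 -> open G -> dense G ->
  exists2 W' : set X, open W' /\ W' !=set0 & closure W' `<=` W `&` G.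
Proof.
move=> oW [w0 Ww0] oG dG.
have [y [Wy Gy]] := dG W (ex_intro _ w0 Ww0) oW.
have /nbhs_ballP[r r0 sub] : nbhs y (W `&` G).
  by apply: open_nbhs_nbhs; split => //; exact: openI.
exists (ball y (r / 2))°; first split.
- exact: open_interior.
- by exists y; apply: nbhsx_ballx; rewrite divr_gt0.
- apply: subset_trans sub; apply: subset_trans (@subset_closure_half _ _ y r r0).
  by apply: closureS; exact: interior_subset.
Qed.

Theorem Baire_compact (G : nat -> set X) : compact [set: X] ->
  (forall k, open (G k) /\ dense (G k)) -> dense (\bigcap_k G k).
Proof.
move=> cX oG O O0 oO.
have shrink (W : set X) (k : nat) : exists W' : set X,
    open W /\ W !=set0 -> [/\ open W', W' !=set0 & closure W' `<=` W `&` G k].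
  have [[oW W0]|] := pselect (open W /\ W !=set0); last by exists set0.
  have [W' [oW' W'0] clW'] := open_closure_subset_open_dense oW W0 (oG k).1 (oG k).2.
  by exists W'.
have [next next_spec] := choice (fun Wk : set X * nat => shrink Wk.1 Wk.2).
pose S := fix S k := if k is k'.+1 then next (S k', k') else O.
have oS k : open (S k) /\ S k !=set0.
  by elim: k => [|k [oSk Sk0]] //=; have [] := next_spec (S k, k) (conj oSk Sk0).
have clS k : closure (S k.+1) `<=` S k `&` G k.
  by have [oSk Sk0] := oS k; have [] := next_spec (S k, k) (conj oSk Sk0).
have S_decr i j : (i <= j)%N -> S j `<=` S i.
  move=> /subnK <-; elim: (j - i)%N => [|m IH] //= x Sx.
  by apply: IH; have [] := clS _ x (subset_closure Sx).
have FS : ProperFilter (filter_from [set: nat] S).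
  apply: filter_from_proper => [|i _]; last exact: (oS i).2.
  apply: filter_from_filter => [|i j _ _]; first by exists 0%N.
  exists (maxn i j) => // x Sx.
  by split; apply: S_decr Sx; [exact: leq_maxl | exact: leq_maxr].
have [q [_ clq]] := cX _ FS filterT.
have clSq k : closure (S k) q by move=> B nB; apply: clq => //; exists k.
exists q; split; first by have [] := clS 0%N q (clSq 1%N).
by move=> k _; have [] := clS k q (clSq k.+1).
Qed.

Definition box d (f : 'I_d -> X) (e : R) : set ('I_d -> X) :=
  [set h | forall i, ball (f i) e (h i)].

Lemma nbhs_ptws_box d (f : {ptws 'I_d -> X}) (O : set {ptws 'I_d -> X}) :
  nbhs f O -> exists2 e : R, 0 < e & box f e `<=` O.
Proof.
pose B := filter_from [set e : R | 0 < e] (box f).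
have FB : Filter B.
  apply: filter_from_filter => [|a b a0 b0]; first by exists 1; rewrite /= ltr01.
  exists (Order.min a b); first by rewrite /= lt_min a0 b0.
  by move=> h hb; split=> i; apply: le_ball (hb i); rewrite ge_min lexx ?orbT.
suff : B --> f by move=> /(_ O) h /h [e e0 he]; exists e.
apply/cvg_sup => i; apply/cvg_image.
  by apply/seteqP; split=> // y _; exists (dfwith f i y) => //; rewrite dfwithin.
move=> A /nbhs_ballP[e e0 sA].
exists [set h : 'I_d -> X | A (h i) /\ forall j, j != i -> ball (f j) e (h j)].
  by exists e => // h hb; split => [|j _]; [exact/sA/hb | exact: hb].
apply/seteqP; split=> [y [h [Ah _] <-] //|y Ay].
exists (dfwith f i y); last by rewrite dfwithin.
split=> [|j ji]; first by rewrite dfwithin.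
by rewrite dfwithout; [exact: ballxx | rewrite eq_sym].
Qed.

End PseudoMetric.

Section Iterates.
Variable A : Type.

Lemma iter_commute (f g : A -> A) : f \o g =1 g \o f ->
  forall m n x, iter m f (iter n g x) = iter n g (iter m f x).
Proof.
move=> fg m n; have fgn y : iter m f (g y) = g (iter m f y).
  by elim: m => [|m IHm] //=; rewrite IHm; exact: fg.
by elim: n => [|n IHn] x //=; rewrite fgn IHn.
Qed.

Lemma iter_cancel (f g : A -> A) : cancel g f -> forall n, cancel (iter n g) (iter n f).
Proof. by move=> gK; elim=> [|n IHn] x //; rewrite iterSr iterS gK IHn. Qed.

End Iterates.

Lemma iter_continuous (X : topologicalType) (f : X -> X) :
  continuous f -> forall n, continuous (iter n f).
Proof.
move=> cf; elim=> [|n IHn] x /=; first exact: cvg_id.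
exact: continuous_comp (IHn x) (cf _).
Qed.

Section IntegerIterates.
Variables (X : topologicalType) (T Tinv : X -> X).
Hypothesis hT : homeomorphism T Tinv.

Lemma iterz_continuous n : continuous (iterz T Tinv n).
Proof. by have [cT cTinv _ _] := hT; case: n => k; apply: iter_continuous. Qed.

Lemma iterzC a b x :
  iterz T Tinv a (iterz T Tinv b x) = iterz T Tinv b (iterz T Tinv a x).
Proof.
have [_ _ TK TinvK] := hT.
have TTinv : T \o Tinv =1 Tinv \o T by move=> y /=; rewrite TK TinvK.
by case: a => m; case: b => n; apply: iter_commute.
Qed.

Lemma iterz_surjective a y : exists x, iterz T Tinv a x = y.
Proof.
have [_ _ TK TinvK] := hT.
by case: a => n; [exists (iter n Tinv y) | exists (iter n.+1 T y)];
  apply: iter_cancel.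
Qed.

End IntegerIterates.

Section PolynomialOrbits.
Variables (R : realType) (X : metricType R) (T Tinv : X -> X).
Variables (d : nat) (p : 'I_d -> {poly rat}).
Hypothesis hT : homeomorphism T Tinv.

Local Notation Tp i n := (iterz T Tinv (pevalz (p i) n)).

Definition poly_orbit (x : X) : set {ptws 'I_d -> X} :=
  [set f | exists n : int, f = (fun i => Tp i n x)].

Definition poly_transitive := forall (U : set X) (V : 'I_d -> set X),
  open U -> U !=set0 -> (forall i, open (V i) /\ V i !=set0) ->
  exists n : int, U `&` \bigcap_(i in [set: 'I_d]) (Tp i n @^-1` V i) !=set0.

Definition poly_hitting (W : 'I_d -> set X) : set X :=
  \bigcup_(n in [set: int]) [set x | forall i, W i (Tp i n x)].

Lemma dense_poly_orbit_transitive : minimal_system T Tinv ->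
  (exists x, dense (poly_orbit x)) -> poly_transitive.
Proof.
move=> Tmin [x dx] U V oU U0 oV.
have [y [Uy [m ym]]] := Tmin x U U0 oU; subst y.
pose W i := iterz T Tinv m @^-1` V i.
have oW i : open (W i).
  by apply: open_comp => [z _|]; [exact: iterz_continuous | exact: (oV i).1].
have W0 i : exists w, W i w.
  have [v Vv] := (oV i).2; have [w wv] := iterz_surjective hT m v.
  by exists w; rewrite /W /= wv.
have [w Ww] := choice W0.
have oWX : open [set h : {ptws 'I_d -> X} | forall i, W i (h i)].
  apply: (@open_forall_preimage _ _ _ (fun i (h : {ptws 'I_d -> X}) => h i)) oW.
  exact: (@proj_continuous _ (fun=> X)).
have [h [Wh [n hn]]] := dx _ (ex_intro _ (w : {ptws 'I_d -> X}) Ww) oWX.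
subst h.
by exists n, (iterz T Tinv m x); split => // i _ /=; rewrite iterzC //; exact: Wh.
Qed.

Lemma open_poly_hitting W : (forall i, open (W i)) -> open (poly_hitting W).
Proof.
move=> oW; apply: bigcup_open => n _.
by apply: open_forall_preimage oW => i; exact: iterz_continuous.
Qed.

Lemma dense_poly_hitting W : poly_transitive ->
  (forall i, open (W i) /\ W i !=set0) -> dense (poly_hitting W).
Proof.
move=> Ttr oW U U0 oU; have [n [x [Ux Wx]]] := Ttr U W oU U0 oW.
by exists x; split => //; exists n => // i; exact: Wx.
Qed.

Lemma dense_poly_orbit_boxes x :
  (forall (f : 'I_d -> X) (e : R), 0 < e -> exists n, forall i, ball (f i) e (Tp i n x)) ->
  dense (poly_orbit x).
Proof.
move=> hit O [f Of] oO.
have [e e0 fO] := nbhs_ptws_box (open_nbhs_nbhs (conj oO Of)).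
have [n hn] := hit f e e0.
by exists (fun i => Tp i n x); split; [exact: fO | exists n].
Qed.

Lemma poly_transitive_Gdelta_dense_orbits : compact [set: X] -> poly_transitive ->
  exists Omega : set X,
    [/\ Gdelta Omega, dense Omega & forall x, Omega x -> dense (poly_orbit x)].
Proof.
move=> cX Ttr; pose r k : R := k.+1%:R^-1.
have r0 k : 0 < r k by rewrite invr_gt0 ltr0n.
pose B k (z : X) := (ball z (r k))°.
have [N netN] := choice (fun k => compact_finite_ball_cover cX (r0 k)).
pose G k := \bigcap_(g in [set: {ffun 'I_d -> N k}]) poly_hitting (fun i => B k (val (g i))).
have oG k : open (G k) /\ dense (G k).
  apply: open_dense_fin_bigcap => g; split.
    by apply: open_poly_hitting => i; exact: open_interior.
  apply: dense_poly_hitting => // i; split; first exact: open_interior.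
  by exists (val (g i)); exact: nbhsx_ballx.
exists (\bigcap_k G k); split; first by exists G => // k; exact: (oG k).1.
  exact: Baire_compact.
move=> x Gx; apply: dense_poly_orbit_boxes => f e e0.
have [k ltrke] := @ltr_add_invr R 0 (e / 2) (divr_gt0 e0 (ltr0Sn _ 1)).
rewrite add0r in ltrke.
have near_net i : exists c : N k, B k (val c) (f i).
  by have [z Nz Bz] := netN k (f i) I; exists (FSetSub Nz).
have [c fc] := choice near_net.
have [n _ hn] := Gx k I [ffun i => c i] I.
exists n => i; have := hn i; rewrite /= ffunE => /interior_subset cx.
apply: (@le_ball _ _ _ (r k + r k)).
  by rewrite [e]splitr; apply: lerD; apply: ltW.
by apply: ball_triangle cx; apply: ball_sym; exact: interior_subset (fc i).
Qed.

End PolynomialOrbits.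

Theorem mainTheorem3 (R : realType) (X : metricType R) (T Tinv : X -> X)
  (d : nat) (p : 'I_d -> {poly rat}) :
  compact [set: X] -> [set: X] !=set0 ->
  homeomorphism T Tinv -> minimal_system T Tinv ->
  (forall i, integer_poly (p i)) -> (forall i, (1 < size (p i))%N) ->
  let orb (x : X) : set {ptws 'I_d -> X} :=
    [set f | exists n : int, f = (fun i => iterz T Tinv (pevalz (p i) n) x)] in
  [<-> (exists Omega : set X, [/\ Gdelta Omega, dense Omega &
          forall x, Omega x -> dense (orb x)]);
       (exists x : X, dense (orb x));
       (forall (U : set X) (V : 'I_d -> set X),
          open U -> U !=set0 -> (forall i, open (V i) /\ V i !=set0) ->
          exists n : int,
            U `&` \bigcap_(i in [set: 'I_d])
                    (iterz T Tinv (pevalz (p i) n) @^-1` V i) !=set0)].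
Proof.
move=> cX X0 hT Tmin _ _ orb; tfae.
- move=> [Om [_ dOm Om_orb]].
  by have [x [_ /Om_orb]] := dOm _ X0 openT; exists x.
- exact: dense_poly_orbit_transitive.
- exact: poly_transitive_Gdelta_dense_orbits.
Qed.
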